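(* Let $G$ be a simple graph on $n$ vertices with $cM_2(G)\ge cM_2(H)$ for every simple graph $H$ on $n$ vertices, and let $F$, $X$, $Y$ be as defined in the context. If $u\in X$, $v\in Y$ and $uv\in E(G)$, then $\overrightarrow{uv}$ is an arc of $F$ (in particular $d_G(u)>d_G(v)$).
   Context: All graphs are finite and simple; $d_G(u)$ is the degree of $u$ and $cM_2(G)=\sum_{uv\in E(G)}|d_G(u)^2-d_G(v)^2|$. The canonical mixed graph $F$ of $G$ has vertex set $V(G)$; for each edge $uv\in E(G)$: if $d_G(u)>d_G(v)$ then $F$ contains the arc $\overrightarrow{uv}$, and if $d_G(u)=d_G(v)$ then $F$ contains the undirected edge $uv$. $d^+_F(u)$ (resp. $d^-_F(u)$) is the number of arcs of $F$ with tail (resp. head) $u$. $X=\{u\in V(G): d^+_F(u)\ge d^-_F(u)\}$ and $Y=\{u\in V(G): d^+_F(u)< d^-_F(u)\}$. *)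

From mathcomp Require Import all_boot.
Set Implicit Arguments. Unset Strict Implicit. Unset Printing Implicit Defensive.

Definition simple_graph (n : nat) (g : rel 'I_n) : Prop :=
  (forall x y, g x y = g y x) /\ (forall x, g x x = false).

Definition deg (n : nat) (g : rel 'I_n) (u : 'I_n) : nat := #|[set w | g u w]|.

Definition absdiff (a b : nat) : nat := (a - b) + (b - a).

Definition cM2 (n : nat) (g : rel 'I_n) : nat :=
  \sum_(u : 'I_n) \sum_(v : 'I_n | (u < v) && g u v)
     absdiff (deg g u ^ 2) (deg g v ^ 2).

Definition arcF (n : nat) (g : rel 'I_n) (u v : 'I_n) : bool :=
  g u v && (deg g v < deg g u).

Definition outdegF (n : nat) (g : rel 'I_n) (u : 'I_n) : nat :=
  #|[set w | arcF g u w]|.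
Definition indegF (n : nat) (g : rel 'I_n) (u : 'I_n) : nat :=
  #|[set w | arcF g w u]|.

Definition inX (n : nat) (g : rel 'I_n) (u : 'I_n) : bool :=
  indegF g u <= outdegF g u.
Definition inY (n : nat) (g : rel 'I_n) (u : 'I_n) : bool :=
  outdegF g u < indegF g u.

From mathcomp Require Import all_boot all_algebra zify ssrAC.
Import GRing.Theory Num.Theory.
Set Implicit Arguments. Unset Strict Implicit. Unset Printing Implicit Defensive.

(* Let [uv] be an edge with [u] in [X], [v] in [Y] and [d(u) <= d(v)].  If every neighbour
   [w <> u] of [v] with [d(w) >= d(v)] were adjacent to [u], counting common neighbours would
   give [d^-(v) <= d^-(u) <= d^+(u) <= d^+(v)], contradicting [v] in [Y]; so some such [w] is
   not adjacent to [u].  Replacing the edge [vw] by [uw] raises [d(u)] and lowers [d(v)] by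
   one.  On an edge [uy] the term [|d(u)^2 - d(y)^2|] changes by [2d(u)+1] or [-(2d(u)+1)]
   according as [y] is an out- or an in-neighbour of [u] in [F], and symmetrically at [v];
   hence [u] in [X] and [v] in [Y] make the change over the edges other than [uv], [vw], [uw]
   nonnegative, and a direct computation on those three edges shows that [cM_2] strictly
   increases, against maximality. *)

Lemma sum_indicator (T : finType) (P : pred T) :
  \sum_(x : T) (P x : nat) = #|[set x | P x]|.
Proof. by rewrite -sum1dep_card [RHS]big_mkcond; apply: eq_bigr => x _; case: (P x). Qed.

Lemma absdiff_sym (a b : nat) : absdiff a b = absdiff b a.
Proof. by rewrite /absdiff addnC. Qed.

Definition edge_wt n (g : rel 'I_n) (x y : 'I_n) : nat :=
  if g x y then absdiff (deg g x ^ 2) (deg g y ^ 2) else 0.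

Lemma edge_wt_sym n (g : rel 'I_n) x y : simple_graph g -> edge_wt g x y = edge_wt g y x.
Proof. by case=> gs _; rewrite /edge_wt gs absdiff_sym. Qed.

Lemma edge_wt_irr n (g : rel 'I_n) x : simple_graph g -> edge_wt g x x = 0.
Proof. by case=> _ gi; rewrite /edge_wt gi. Qed.

Lemma cM2_edge_wt n (g : rel 'I_n) : cM2 g = \sum_(x : 'I_n) \sum_(y : 'I_n | x < y) edge_wt g x y.
Proof. by apply: eq_bigr => x _; rewrite big_mkcondr. Qed.

Section RotationTarget.
Variables (n : nat) (g : rel 'I_n) (u v : 'I_n).
Hypotheses (sg : simple_graph g) (guv : g u v) (le_uv : deg g u <= deg g v).
Hypothesis no_target : forall w, g v w -> ~~ g u w -> w != u -> deg g w < deg g v.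

Lemma indegF_le : indegF g v <= indegF g u.
Proof.
have [gs _] := sg.
apply/subset_leq_card/subsetP => y; rewrite !inE /arcF => /andP [gyv lt_vy].
have neq_yu : y != u by apply: contraTneq lt_vy => ->; rewrite -leqNgt.
have guy : g u y.
  by apply: contraTT lt_vy => nguy; rewrite -leqNgt ltnW // no_target // gs.
by rewrite gs guy (leq_ltn_trans le_uv lt_vy).
Qed.

Lemma outdegF_le : outdegF g u <= outdegF g v.
Proof.
have [gs gi] := sg.
rewrite /outdegF.
set Ou := [set w | arcF g u w]; set Ov := [set w | arcF g v w].
set Nu := [set w | g u w]; set Nv := [set w | g v w].
change (#|Ou| <= #|Ov|).
have common : Ou :&: Nv \subset Ov :&: Nu.
  apply/subsetP => y; rewrite !inE /arcF => /andP [/andP [guy lt] gvy].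
  by rewrite gvy guy (leq_trans lt le_uv).
have only_u : Ou :\: Nv \subset (Nu :\: Nv) :\ v.
  apply/subsetP => y; rewrite !inE /arcF => /andP [ngvy /andP [guy lt]].
  by rewrite ngvy guy !andbT; apply: contraTneq lt => ->; rewrite -leqNgt.
have only_v : (Nv :\: Nu) :\ u \subset Ov :\: Nu.
  apply/subsetP => y; rewrite !inE /arcF => /andP [yu /andP [nguy gvy]].
  by rewrite nguy gvy no_target.
have cardNuv : #|Nu :\: Nv| = 1 + #|(Nu :\: Nv) :\ v|.
  by rewrite (cardsD1 v) !inE gi guv.
have cardNvu : #|Nv :\: Nu| = 1 + #|(Nv :\: Nu) :\ u|.
  by rewrite (cardsD1 u) !inE gi gs guv.
have := cardsID Nv Ou; have := cardsID Nu Ov; have := cardsID Nv Nu.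
have := cardsID Nu Nv; rewrite [Nv :&: Nu]setIC.
have le_card : #|Nu| <= #|Nv| := le_uv.
move: (subset_leq_card common) (subset_leq_card only_u) (subset_leq_card only_v).
lia.
Qed.

End RotationTarget.

Lemma exists_rotation_target n (g : rel 'I_n) (u v : 'I_n) :
  simple_graph g -> inX g u -> inY g v -> g u v -> deg g u <= deg g v ->
  exists w, [&& g v w, ~~ g u w, w != u & deg g v <= deg g w].
Proof.
move=> sg in_u in_v guv le_uv; apply/existsP/contraT.
rewrite negb_exists => /forallP no_target.
have {}no_target w : g v w -> ~~ g u w -> w != u -> deg g w < deg g v.
  by move=> gvw nguw wu; move: (no_target w); rewrite gvw nguw wu /= -ltnNge.
have := leq_trans in_u (outdegF_le sg guv le_uv no_target).
by move/(leq_trans (indegF_le sg le_uv no_target)); rewrite leqNgt -/(inY g v) in_v.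
Qed.

Lemma rotation_gain_arith a b c : 0 < a -> a <= b.+1 -> b.+1 <= c ->
  absdiff (b.+1 ^ 2) (c ^ 2) + absdiff (a ^ 2) (b.+1 ^ 2) <
  absdiff (a.+1 ^ 2) (c ^ 2) + absdiff (a.+1 ^ 2) (b ^ 2) + (2 * a + 2 * b + 2) * (a < b.+1).
Proof.
move=> a_gt0 le_ab le_bc; rewrite /absdiff.
case: (ltngtP a b.+1) => [lt_ab | gt_ab | ->]; [| lia | nia].
case: (leqP c a.+1) => [le_ca | lt_ac]; last by nia.
have [-> ->] : c = a.+1 /\ b = a by lia.
nia.
Qed.

Local Open Scope ring_scope.

Section SymmetricSums.
Variables (V : nmodType) (n : nat) (D : 'I_n -> 'I_n -> V).
Hypothesis D_sym : forall x y, D x y = D y x.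

Lemma sum_sym_pairs : (forall x, D x x = 0) ->
  \sum_x \sum_y D x y = (\sum_(x : 'I_n) \sum_(y : 'I_n | (x < y)%N) D x y) *+ 2.
Proof.
move=> D0.
transitivity (\sum_(x : 'I_n) \sum_(y : 'I_n)
  ((if (x < y)%N then D x y else 0) + (if (y < x)%N then D x y else 0))).
  apply: eq_bigr => x _; apply: eq_bigr => y _.
  by case: ltngtP => [||/val_inj->]; rewrite ?addr0 ?add0r ?D0.
under eq_bigr do rewrite big_split /=.
rewrite big_split mulr2n /=; congr (_ + _).
  by apply: eq_bigr => x _; rewrite [RHS]big_mkcond.
rewrite exchange_big; apply: eq_bigr => x _; rewrite [RHS]big_mkcond.
by apply: eq_bigr => y _; rewrite D_sym.
Qed.

Variables (u v : 'I_n).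
Hypothesis neq_uv : u != v.
Hypothesis D_off : forall x y, x != u -> x != v -> y != u -> y != v -> D x y = 0.

Lemma sum_sym_supported_on_pair :
  \sum_x \sum_y D x y =
  (\sum_(y | (y != u) && (y != v)) (D u y + D v y) + D u v) *+ 2 + D u u + D v v.
Proof.
have row x : \sum_y D x y = D x u + D x v + \sum_(y | (y != u) && (y != v)) D x y.
  by rewrite (bigD1 u) //= (bigD1 v) 1?eq_sym //= addrA.
have rest : \sum_(x | (x != u) && (x != v)) \sum_y D x y =
            \sum_(y | (y != u) && (y != v)) (D u y + D v y).
  apply: eq_bigr => x /andP [xu xv].
  by rewrite row big1 ?addr0 ?(D_sym x u) ?(D_sym x v) // => y /andP []; apply: D_off.
rewrite [LHS](bigD1 u) //= [\sum_(i | i != u) _](bigD1 v) 1?eq_sym //=.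
rewrite rest !row (D_sym v u) big_split /= !mulr2n.
by rewrite !addrA [LHS](ACl (3*6*2*7*8*4*1*5)%AC).
Qed.

End SymmetricSums.

Definition wt_change n (g h : rel 'I_n) (x y : 'I_n) : int :=
  (edge_wt h x y)%:R - (edge_wt g x y)%:R.

Lemma cM2_local_change n (g h : rel 'I_n) (u v : 'I_n) :
  simple_graph g -> simple_graph h -> u != v ->
  (forall x y, x != u -> x != v -> y != u -> y != v -> edge_wt h x y = edge_wt g x y) ->
  (cM2 h)%:R - (cM2 g)%:R =
  \sum_(y | (y != u) && (y != v)) (wt_change g h u y + wt_change g h v y) + wt_change g h u v.
Proof.
move=> sg sh neq_uv same; set D := wt_change g h.
have D_sym x y : D x y = D y x by rewrite /D /wt_change (edge_wt_sym x y sg) (edge_wt_sym x y sh).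
have D0 x : D x x = 0 by rewrite /D /wt_change !edge_wt_irr ?subrr.
have D_off x y : x != u -> x != v -> y != u -> y != v -> D x y = 0.
  by move=> *; rewrite /D /wt_change same ?subrr.
have := sum_sym_pairs D_sym D0; rewrite (sum_sym_supported_on_pair D_sym neq_uv D_off) !D0 !addr0.
have -> : \sum_(x : 'I_n) \sum_(y : 'I_n | (x < y)%N) D x y = (cM2 h)%:R - (cM2 g)%:R.
  rewrite !cM2_edge_wt !natr_sum -sumrB; apply: eq_bigr => x _.
  by rewrite !natr_sum -sumrB.
by move=> /eqP; rewrite eqrMn2r => /eqP <-.
Qed.

Lemma absdiff_sq_incr_ge (a e : nat) :
  (2 * a + 1)%:R * ((e < a)%N%:R - (a < e)%N%:R) <=
  (absdiff (a.+1 ^ 2) (e ^ 2))%:R - (absdiff (a ^ 2) (e ^ 2))%:R :> int.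
Proof. by rewrite /absdiff; case: ltngtP => h /=; nia. Qed.

Lemma absdiff_sq_decr_ge (b e : nat) :
  (2 * b + 1)%:R * ((b.+1 < e)%N%:R - (e < b.+1)%N%:R) <=
  (absdiff (b ^ 2) (e ^ 2))%:R - (absdiff (b.+1 ^ 2) (e ^ 2))%:R :> int.
Proof. by rewrite /absdiff; case: ltngtP => h /=; nia. Qed.

Lemma wt_change_incr_ge n (g h : rel 'I_n) (x y : 'I_n) : simple_graph g ->
  h x y = g x y -> deg h x = (deg g x).+1 -> deg h y = deg g y ->
  (2 * deg g x + 1)%:R * ((arcF g x y)%:R - (arcF g y x)%:R) <= wt_change g h x y.
Proof.
case=> gs _ hxy dx dy; rewrite /wt_change /edge_wt /arcF hxy dx dy (gs y x).
by case: (g x y); rewrite ?subrr ?mulr0 //; apply: absdiff_sq_incr_ge.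
Qed.

Lemma wt_change_decr_ge n (g h : rel 'I_n) (x y : 'I_n) : simple_graph g ->
  h x y = g x y -> deg g x = (deg h x).+1 -> deg h y = deg g y ->
  (2 * deg h x + 1)%:R * ((arcF g y x)%:R - (arcF g x y)%:R) <= wt_change g h x y.
Proof.
case=> gs _ hxy dx dy; rewrite /wt_change /edge_wt /arcF hxy dx dy (gs y x).
by case: (g x y); rewrite ?subrr ?mulr0 //; apply: absdiff_sq_decr_ge.
Qed.

Lemma sum_arcF_out n (g : rel 'I_n) (u : 'I_n) :
  \sum_y (arcF g u y)%:R = (outdegF g u)%:R :> int.
Proof. by rewrite -natr_sum sum_indicator. Qed.

Lemma sum_arcF_in n (g : rel 'I_n) (u : 'I_n) :
  \sum_y (arcF g y u)%:R = (indegF g u)%:R :> int.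
Proof. by rewrite -natr_sum (sum_indicator (arcF g ^~ u)). Qed.

Definition rotate_edge n (g : rel 'I_n) (u v w : 'I_n) : rel 'I_n := fun x y =>
  if ((x == u) && (y == w)) || ((x == w) && (y == u)) then true
  else if ((x == v) && (y == w)) || ((x == w) && (y == v)) then false
  else g x y.

Section EdgeRotation.
Variables (n : nat) (g : rel 'I_n) (u v w : 'I_n).
Hypotheses (sg : simple_graph g) (guv : g u v) (gvw : g v w) (nguw : ~~ g u w).
Hypothesis neq_wu : w != u.

Let h := rotate_edge g u v w.

Let neq_uv : u != v. Proof. by apply: contraTneq guv => ->; rewrite sg.2. Qed.
Let neq_wv : w != v. Proof. by apply: contraTneq gvw => ->; rewrite sg.2. Qed.

Lemma rotate_edge_simple : simple_graph h.
Proof.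
have [gs gi] := sg; split=> [x y | x]; rewrite /h /rotate_edge.
  by rewrite gs; do 6 case: eqP => //.
have [-> | xu] := eqVneq x u; first by rewrite eq_sym (negbTE neq_wu) (negbTE neq_uv) andbF gi.
by rewrite andbF /=; case: ifP; rewrite ?gi.
Qed.

Lemma rotate_edge_u y : h u y = (y == w) || g u y.
Proof.
by rewrite /h /rotate_edge eqxx eq_sym (negbTE neq_uv) (eq_sym u w) (negbTE neq_wu); case: eqP.
Qed.

Lemma rotate_edge_v y : h v y = (y != w) && g v y.
Proof.
rewrite /h /rotate_edge eqxx (eq_sym v u) (negbTE neq_uv) (eq_sym v w) (negbTE neq_wv).
by case: eqP.
Qed.

Lemma rotate_edge_other x y : x != u -> x != v -> y != u -> y != v -> h x y = g x y.
Proof. by rewrite /h /rotate_edge => /negbTE-> /negbTE-> /negbTE-> /negbTE->; rewrite !andbF. Qed.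

Lemma deg_rotate_edge_u : deg h u = (deg g u).+1.
Proof.
rewrite /deg (_ : [set y | h u y] = w |: [set y | g u y]) ?cardsU1 ?inE ?nguw //.
by apply/setP => y; rewrite !inE rotate_edge_u.
Qed.

Lemma deg_rotate_edge_v : deg g v = (deg h v).+1.
Proof.
rewrite /deg (_ : [set y | h v y] = [set y | g v y] :\ w) ?(cardsD1 w [set y | g v y]) ?inE ?gvw //.
by apply/setP => y; rewrite !inE rotate_edge_v.
Qed.

Lemma deg_rotate_edge_other x : x != u -> x != v -> deg h x = deg g x.
Proof.
move=> xu xv; have [gs gi] := sg; rewrite /deg.
have [-> | xw] := eqVneq x w; last first.
  by apply: eq_card => y; rewrite !inE /h /rotate_edge (negbTE xu) (negbTE xv) (negbTE xw).
rewrite (_ : [set y | h w y] = u |: ([set y | g w y] :\ v)); last first.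
  apply/setP => y; rewrite !inE /h /rotate_edge eqxx (negbTE neq_wu) (negbTE neq_wv) /=.
  by case: (y == u); case: (y == v).
rewrite cardsU1 !inE (negbTE neq_uv) gs (negbTE nguw) andbF.
by rewrite [in RHS](cardsD1 v) inE gs gvw.
Qed.

Definition first_order_gain (y : 'I_n) : int :=
  (2 * deg g u + 1)%:R * ((arcF g u y)%:R - (arcF g y u)%:R) +
  (2 * deg h v + 1)%:R * ((arcF g y v)%:R - (arcF g v y)%:R).

Lemma first_order_gain_le y : y != u -> y != v -> y != w ->
  first_order_gain y <= wt_change g h u y + wt_change g h v y.
Proof.
move=> yu yv yw; have dy := deg_rotate_edge_other yu yv.
apply: lerD.
  apply: wt_change_incr_ge => //; first by rewrite rotate_edge_u // (negbTE yw).
  exact: deg_rotate_edge_u.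
apply: wt_change_decr_ge => //; first by rewrite rotate_edge_v // yw.
exact: deg_rotate_edge_v.
Qed.

Lemma sum_first_order_gain :
  \sum_y first_order_gain y =
  (2 * deg g u + 1)%:R * ((outdegF g u)%:R - (indegF g u)%:R) +
  (2 * deg h v + 1)%:R * ((indegF g v)%:R - (outdegF g v)%:R).
Proof.
by rewrite big_split /= -!mulr_sumr !sumrB sum_arcF_out sum_arcF_in sum_arcF_out sum_arcF_in.
Qed.

Let arcF_irr x : arcF g x x = false. Proof. by rewrite /arcF sg.2. Qed.

Hypothesis le_uv : (deg g u <= deg g v)%N.

Lemma first_order_gain_u : first_order_gain u = - ((2 * deg h v + 1)%:R * (arcF g v u)%:R).
Proof.
have no_uv : arcF g u v = false by rewrite /arcF guv ltnNge le_uv.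
by rewrite /first_order_gain !arcF_irr no_uv subrr mulr0 add0r sub0r mulrN.
Qed.

Lemma first_order_gain_v : first_order_gain v = - ((2 * deg g u + 1)%:R * (arcF g v u)%:R).
Proof.
have no_uv : arcF g u v = false by rewrite /arcF guv ltnNge le_uv.
by rewrite /first_order_gain !arcF_irr no_uv subrr mulr0 addr0 sub0r mulrN.
Qed.

Lemma first_order_gain_w_le : first_order_gain w <= (2 * deg h v + 1)%:R.
Proof.
rewrite /first_order_gain /arcF (sg.1 w u) (negbTE nguw) subrr mulr0 add0r.
by case: (_ && _); case: (_ && _); rewrite /=; lia.
Qed.

Lemma edge_wt_rotate_edge_other x y : x != u -> x != v -> y != u -> y != v ->
  edge_wt h x y = edge_wt g x y.
Proof. by move=> xu xv yu yv; rewrite /edge_wt rotate_edge_other // !deg_rotate_edge_other. Qed.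

Lemma wt_change_uw : wt_change g h u w = (absdiff ((deg g u).+1 ^ 2) (deg g w ^ 2))%:R.
Proof.
rewrite /wt_change /edge_wt rotate_edge_u eqxx (negbTE nguw) deg_rotate_edge_u.
by rewrite deg_rotate_edge_other // subr0.
Qed.

Lemma wt_change_vw : wt_change g h v w = - (absdiff ((deg h v).+1 ^ 2) (deg g w ^ 2))%:R.
Proof. by rewrite /wt_change /edge_wt rotate_edge_v eqxx gvw -deg_rotate_edge_v sub0r. Qed.

Lemma wt_change_uv : wt_change g h u v =
  (absdiff ((deg g u).+1 ^ 2) (deg h v ^ 2))%:R - (absdiff (deg g u ^ 2) ((deg h v).+1 ^ 2))%:R.
Proof.
by rewrite /wt_change /edge_wt rotate_edge_u guv orbT deg_rotate_edge_u -deg_rotate_edge_v.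
Qed.

Lemma sum_first_order_gain_off_uv :
  \sum_(y | (y != u) && (y != v)) first_order_gain y =
  \sum_y first_order_gain y - first_order_gain u - first_order_gain v.
Proof.
rewrite [in RHS](bigD1 u) //= [in RHS](bigD1 v) 1?eq_sym //=.
by rewrite [first_order_gain u + _]addrC addrK [first_order_gain v + _]addrC addrK.
Qed.

Lemma sum_wt_change_off_uv_ge :
  \sum_(y | (y != u) && (y != v)) first_order_gain y +
    (wt_change g h u w + wt_change g h v w - first_order_gain w) <=
  \sum_(y | (y != u) && (y != v)) (wt_change g h u y + wt_change g h v y).
Proof.
have wR : (w != u) && (w != v) by rewrite neq_wu neq_wv.
rewrite (bigD1 w wR) [in X in _ <= X](bigD1 w wR) /=.
rewrite addrAC [first_order_gain w + _]addrC subrK lerD2l.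
by apply: ler_sum => y /andP [/andP [yu yv] yw]; apply: first_order_gain_le.
Qed.

Hypotheses (in_u : inX g u) (in_v : inY g v) (le_vw : (deg g v <= deg g w)%N).

Lemma cM2_rotate_edge_gt : (cM2 g < cM2 h)%N.
Proof.
have cM2_change := cM2_local_change sg rotate_edge_simple neq_uv edge_wt_rotate_edge_other.
rewrite wt_change_uv in cM2_change.
have lower := sum_wt_change_off_uv_ge.
rewrite sum_first_order_gain_off_uv sum_first_order_gain in lower.
rewrite first_order_gain_u first_order_gain_v wt_change_uw wt_change_vw in lower.
have gain_w := first_order_gain_w_le.
have out_u_gain : 0 <= (2 * deg g u + 1)%:R * ((outdegF g u)%:R - (indegF g u)%:R) :> int.
  by rewrite mulr_ge0 // subr_ge0 ler_nat.
have in_v_gain : (2 * deg h v + 1)%:R <=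
    (2 * deg h v + 1)%:R * ((indegF g v)%:R - (outdegF g v)%:R) :> int.
  by rewrite ler_peMr // lerBrDr; move: in_v; rewrite /inY; lia.
have deg_u_gt0 : (0 < deg g u)%N by apply/card_gt0P; exists v; rewrite inE.
move: le_uv le_vw; rewrite deg_rotate_edge_v => le_uv' le_vw'.
have arith := rotation_gain_arith deg_u_gt0 le_uv' le_vw'.
have beta : arcF g v u = (deg g u < (deg h v).+1)%N.
  by rewrite /arcF sg.1 guv deg_rotate_edge_v.
rewrite beta in lower; move: cM2_change lower gain_w out_u_gain in_v_gain arith.
by case: (deg g u < (deg h v).+1)%N => /=; lia.
Qed.

End EdgeRotation.

Local Close Scope ring_scope.

Theorem corollary2 (n : nat) (g : rel 'I_n) :
  simple_graph g ->
  (forall h : rel 'I_n, simple_graph h -> cM2 h <= cM2 g) ->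
  forall u v : 'I_n, inX g u -> inY g v -> g u v -> arcF g u v.
Proof.
move=> sg cM2_max u v in_u in_v guv.
rewrite /arcF guv ltnNge; apply/negP => le_uv.
have [w /and4P [gvw nguw neq_wu le_vw]] := exists_rotation_target sg in_u in_v guv le_uv.
have := cM2_max _ (rotate_edge_simple sg guv neq_wu).
by rewrite leqNgt (cM2_rotate_edge_gt sg guv gvw nguw neq_wu le_uv in_u in_v le_vw).
Qed.
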